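(* Let $W=\sum_{j\in[n]}p_j\mathrm B(\varepsilon_j)\in\mathbb B_n^*$ and $Q=\sum_{i\in[m]}q_i\mathrm B(\sigma_i)\in\mathbb B_m^*$, with all $p_j,q_i>0$, $\sum_jp_j=\sum_iq_i=1$, $0\le\varepsilon_1<\cdots<\varepsilon_n\le1/2$ and $0\le\sigma_1<\cdots<\sigma_m\le1/2$. If $W\preccurlyeq Q$, then $\varepsilon_1\ge\sigma_1$. If moreover $W$ is a $2n$-P-degradation of $Q$, then $\varepsilon_n\le\sigma_m$.
   Context: A BIDMC $W$ has input uniform on $\{0,1\}$, discrete output alphabet $\mathcal Y$ and transition probabilities $\Pr(y\mid x)$; its LR-profile is $P_W(\varepsilon)=\Pr\big(\mathcal L_W(y)=\varepsilon/(1-\varepsilon)\big)$ with $\mathcal L_W(\hat y)=\Pr(y=\hat y\mid x=0)/\Pr(y=\hat y\mid x=1)$, and $W\cong W'$ if LR-profiles coincide. $W'\preccurlyeq W$ if there is a channel $T$ from the output alphabet of $W$ to that of $W'$ with $\Pr(y'\mid x'=a)=\sum_{y}\Pr(y\mid x=a)T(y'\mid y)$. $\mathrm B(\varepsilon)$ is the BSC with crossover probability $\varepsilon$; $\sum_iq_iW_i$ denotes the random switching channel (use $W_i$ with probability $q_i$ independently of the input and output the index $i$ along with the output). $\mathbb B_n$ is the set of BIDMCs equivalent to $\sum_{i\in[n]}p_i\mathrm B(\varepsilon_i)$ for a probability vector $(p_i)$ and $\varepsilon_i\in[0,1]$; $\mathbb B_n^*=\mathbb B_n\setminus\mathbb B_{n-1}$.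 $P_\epsilon(W)=\frac12\sum_{y}\min\{\Pr(y\mid x=0),\Pr(y\mid x=1)\}$. For a symmetric BIDMC $Q$ and $n\ge1$, $W$ is a $2n$-P-degradation of $Q$ if $W\in\mathbb B_n$, $W\preccurlyeq Q$ and $P_\epsilon(W)=\min\{P_\epsilon(W'):W'\in\mathbb B_n,\ W'\preccurlyeq Q\}$. *)

From HB Require Import structures.
From mathcomp Require Import all_boot all_order all_algebra.
Set Implicit Arguments.
Unset Strict Implicit.
Unset Printing Implicit Defensive.
Import Order.TTheory GRing.Theory Num.Theory.
Local Open Scope ring_scope.

Section Channels.
Variable R : realFieldType.

(* A channel with output alphabet Y: [W x y] = Pr(y | x), where the input
   0 is encoded by [false] and the input 1 by [true]. *)
Definition chan (Y : finType) := bool -> Y -> R.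

Definition is_channel (Y : finType) (W : chan Y) : Prop :=
  forall x : bool, (forall y, 0 <= W x y) /\ \sum_(y : Y) W x y = 1.

Definition prob_vec (n : nat) (p : 'I_n -> R) : Prop :=
  (forall i, 0 <= p i) /\ \sum_(i < n) p i = 1.

(* Likelihood ratio L_W(y) = Pr(y|x=0)/Pr(y|x=1); [None] stands for +oo. *)
Definition LR (Y : finType) (W : chan Y) (y : Y) : option R :=
  if W true y == 0 then None else Some (W false y / W true y).

Definition lr_target (e : R) : option R :=
  if e == 1 then None else Some (e / (1 - e)).

(* LR-profile: P_W(eps) = Pr(L_W(y) = eps/(1-eps)) under uniform input. *)
Definition LRprofile (Y : finType) (W : chan Y) (e : R) : R :=
  \sum_(y : Y | LR W y == lr_target e) (W false y + W true y) / 2%:R.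

Definition chan_equiv (Y Y' : finType) (W : chan Y) (W' : chan Y') : Prop :=
  forall e : R, LRprofile W e = LRprofile W' e.

Definition degraded (Y' Y : finType) (W' : chan Y') (W : chan Y) : Prop :=
  exists T : Y -> Y' -> R,
    [/\ (forall y y', 0 <= T y y'),
        (forall y, \sum_(y' : Y') T y y' = 1) &
        (forall (a : bool) (y' : Y'), W' a y' = \sum_(y : Y) W a y * T y y')].

Definition bsc (e : R) : chan bool :=
  fun x y => if x == y then 1 - e else e.

(* Random switching channel sum_i p_i B(eps_i): the output is the pair
   (i, output of B(eps_i)). *)
Definition bsc_mix (n : nat) (p e : 'I_n -> R) : chan ('I_n * bool)%type :=
  fun x iy => p iy.1 * bsc (e iy.1) x iy.2.

Definition inB (n : nat) (Y : finType) (W : chan Y) : Prop :=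
  is_channel W /\
  exists p e : 'I_n -> R,
    [/\ prob_vec p, (forall i, 0 <= e i <= 1) & chan_equiv W (bsc_mix p e)].

Definition inBstar (n : nat) (Y : finType) (W : chan Y) : Prop :=
  inB n W /\ ~ inB n.-1 W.

Definition Pe (Y : finType) (W : chan Y) : R :=
  2%:R^-1 * \sum_(y : Y) Num.min (W false y) (W true y).

Definition P_degradation (n : nat) (Y Z : finType) (W : chan Y) (Q : chan Z)
  : Prop :=
  [/\ (1 <= n)%N, inB n W, degraded W Q &
      forall (Y' : finType) (W' : chan Y'),
        inB n W' -> degraded W' Q -> Pe W <= Pe W'].

End Channels.

From HB Require Import structures.
From mathcomp Require Import all_boot all_order all_algebra.
From mathcomp Require Import ring lra.
Set Implicit Arguments.
Unset Strict Implicit.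
Unset Printing Implicit Defensive.
Import Order.TTheory GRing.Theory Num.Theory.
Local Open Scope ring_scope.

(* For the first claim: an output of Q = sum_i q_i B(sig_i) has posterior
   probability of input 1 at least sig_1, and this lower bound survives any
   degradation; the output (1, 0) of W has posterior eps_1.
   For the second claim: if eps_n > sig_m =: s, a symmetric degrading kernel
   from Q to W can be modified so that every component B(eps_j) with
   eps_j > s is replaced by B(s), each B(sig_i) being further degraded to B(s)
   by a BSC.  The resulting W' is still in B_n and degraded from Q, but has a
   strictly smaller error probability, contradicting the optimality of W. *)

Section BSC.
Variable R : realFieldType.

Definition degrades_by (Y' Y : finType) (W' : chan R Y') (W : chan R Y)
    (T : Y -> Y' -> R) : Prop :=
  [/\ (forall y y', 0 <= T y y'),
      (forall y, \sum_(y' : Y') T y y' = 1) &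
      (forall (a : bool) (y' : Y'), W' a y' = \sum_(y : Y) W a y * T y y')].

Lemma big_pair_bool k (F : 'I_k * bool -> R) :
  \sum_(y : 'I_k * bool) F y = \sum_(i < k) (F (i, false) + F (i, true)).
Proof.
transitivity (\sum_(i < k) \sum_(b : bool) F (i, b)).
  by rewrite pair_bigA; apply: eq_bigr => -[].
by apply: eq_bigr => i _; rewrite big_bool addrC.
Qed.

Lemma bsc_ge0 (e : R) a b : 0 <= e <= 1 -> 0 <= bsc e a b.
Proof. by case/andP=> e_ge0 e_le1; rewrite /bsc; case: (a == b); rewrite ?subr_ge0. Qed.

Lemma bsc_sum (e : R) a : bsc e a false + bsc e a true = 1.
Proof. by case: a; rewrite /bsc /=; ring. Qed.

Lemma bsc_comp (sig beta : R) a b :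
  \sum_(c : bool) bsc sig a c * bsc beta c b
  = bsc (sig + beta * (1 - 2%:R * sig)) a b.
Proof. by rewrite big_bool; case: a; case: b; rewrite /bsc /=; ring. Qed.

(* The crossover of the BSC that degrades B(sig) to B(s); when sig = s = 1/2
   the denominator vanishes and the value 0 is the right one. *)
Definition link_crossover (sig s : R) : R := (s - sig) / (1 - 2%:R * sig).

Lemma link_crossover_range (sig s : R) :
  sig <= s -> s <= 2%:R^-1 -> 0 <= link_crossover sig s <= 1.
Proof.
move=> sig_le_s s_le; have : 0 <= 1 - 2%:R * sig by lra.
rewrite le0r /link_crossover => /orP[/eqP-> | den_gt0].
  by rewrite invr0 mulr0 lexx ler01.
rewrite divr_ge0 ?(ltW den_gt0) ?subr_ge0 //= ler_pdivrMr // mul1r; lra.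
Qed.

Lemma bsc_link_comp (sig s : R) a b :
  sig <= s -> s <= 2%:R^-1 ->
  \sum_(c : bool) bsc sig a c * bsc (link_crossover sig s) c b = bsc s a b.
Proof.
move=> sig_le_s s_le; rewrite bsc_comp /link_crossover.
have [den0 | den_neq0] := eqVneq (1 - 2%:R * sig) 0.
  by rewrite den0 mulr0 addr0 (_ : sig = s) //; lra.
by congr bsc; field.
Qed.

Lemma Pe_bsc_mix k (p e : 'I_k -> R) :
  (forall j, 0 <= p j) -> (forall j, e j <= 2%:R^-1) ->
  Pe (bsc_mix p e) = \sum_(j < k) p j * e j.
Proof.
move=> p_ge0 e_le; rewrite /Pe big_pair_bool mulr_sumr; apply: eq_bigr => j _.
have le_e : p j * e j <= p j * (1 - e j) by apply: ler_wpM2l => //; have := e_le j; lra.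
by rewrite /bsc_mix /bsc /= (min_r le_e) (min_l le_e); field.
Qed.

Lemma inB_bsc_mix k (p e : 'I_k -> R) :
  prob_vec p -> (forall j, 0 <= e j <= 1) -> inB k (bsc_mix p e).
Proof.
move=> [p_ge0 p_sum1] e_range; split; last by exists p, e; split=> // e'.
move=> a; split=> [[j b] | ]; first by rewrite mulr_ge0 ?bsc_ge0.
by rewrite big_pair_bool -p_sum1; apply: eq_bigr => j _; rewrite -mulrDr bsc_sum mulr1.
Qed.

Lemma degraded_posterior_ge (Y' Y : finType) (W' : chan R Y') (W : chan R Y) s :
  degraded W' W ->
  (forall y, s * (W false y + W true y) <= W true y) ->
  forall y', s * (W' false y' + W' true y') <= W' true y'.
Proof.
move=> [T [T_ge0 _ W'E]] W_post y'; rewrite !W'E -big_split mulr_sumr.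
by apply: ler_sum => y _ /=; rewrite -mulrDl mulrA ler_wpM2r.
Qed.

Lemma bsc_mix_posterior_ge k (q sig : 'I_k -> R) s :
  (forall i, 0 <= q i) -> (forall i, s <= sig i <= 1 - s) ->
  forall y, s * (bsc_mix q sig false y + bsc_mix q sig true y)
            <= bsc_mix q sig true y.
Proof.
move=> q_ge0 sig_range [i c]; have /andP[? ?] := sig_range i; have := q_ge0 i.
by rewrite /bsc_mix /bsc /=; case: c => /=; nra.
Qed.

Lemma degraded_symmetric (Y' Y : finType) (W' : chan R Y') (W : chan R Y)
    (f : Y -> Y) (g : Y' -> Y') :
  involutive f -> involutive g ->
  (forall a y, W (~~ a) (f y) = W a y) ->
  (forall a y', W' (~~ a) (g y') = W' a y') ->
  degraded W' W ->
  exists2 T, degrades_by W' W T & forall y y', T (f y) (g y') = T y y'.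
Proof.
move=> fK gK W_sym W'_sym [T [T_ge0 T_sum1 W'E]].
exists (fun y y' => (T y y' + T (f y) (g y')) / 2%:R); last first.
  by move=> y y'; rewrite fK gK addrC.
split=> [y y' | y | a y'].
- by rewrite divr_ge0 ?addr_ge0.
  rewrite -mulr_suml big_split /= [X in _ + X](reindex_inj (inv_inj gK)) /=.
  by under [X in _ + X]eq_bigr do rewrite gK; rewrite !T_sum1; field.
- have W'_flip : \sum_y W a y * T (f y) (g y') = W' a y'.
    rewrite (reindex_inj (inv_inj fK)) -(W'_sym a) W'E /=.
    by apply: eq_bigr => y _; rewrite fK -[a in W a]negbK W_sym.
  under eq_bigr do rewrite mulrA mulrDr.
  by rewrite -mulr_suml big_split /= -W'E W'_flip; field.
Qed.

Definition flip_out k (y : 'I_k * bool) : 'I_k * bool := (y.1, ~~ y.2).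

Lemma flip_outK k : involutive (@flip_out k).
Proof. by move=> [i b]; rewrite /flip_out negbK. Qed.

Lemma bsc_mix_flip k (p e : 'I_k -> R) a y :
  bsc_mix p e (~~ a) (flip_out y) = bsc_mix p e a y.
Proof. by case: y a => i b [] /=; case: b. Qed.

Section Clip.
Variables (n m : nat) (p eps : 'I_n -> R) (q sig : 'I_m -> R).
Variable T : 'I_m * bool -> 'I_n * bool -> R.
Hypothesis T_degrades : degrades_by (bsc_mix p eps) (bsc_mix q sig) T.
Hypothesis T_flip : forall y z, T (flip_out y) (flip_out z) = T y z.

(* The probability that the degrading kernel maps an output of the i-th
   component of Q to the j-th component of W; by symmetry it does not depend
   on the bit output by B(sig_i). *)
Definition mass (j : 'I_n) (i : 'I_m) : R :=
  T (i, false) (j, false) + T (i, false) (j, true).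

Lemma massE j i c : T (i, c) (j, false) + T (i, c) (j, true) = mass j i.
Proof.
case: c => //; rewrite /mass addrC.
by rewrite -[T (i, true) (j, false)]T_flip -[T (i, true) (j, true)]T_flip.
Qed.

Lemma mass_ge0 j i : 0 <= mass j i.
Proof. by case: T_degrades => T_ge0 _ _; rewrite addr_ge0. Qed.

Lemma sum_mass i : \sum_j mass j i = 1.
Proof. by case: T_degrades => _ T_sum1 _; rewrite -(T_sum1 (i, false)) big_pair_bool. Qed.

Lemma sum_weighted_mass j : \sum_i q i * mass j i = p j.
Proof.
case: T_degrades => _ _ W_E.
have -> : p j = bsc_mix p eps false (j, false) + bsc_mix p eps false (j, true).
  by rewrite /bsc_mix /bsc /=; ring.
rewrite !W_E -big_split; under eq_bigr => y _ do rewrite /= -mulrDr.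
by rewrite big_pair_bool; apply: eq_bigr => i _; rewrite !massE /bsc_mix /bsc /=; ring.
Qed.

Variable s : R.
Hypotheses (sig_le : forall i, sig i <= s) (s_le : s <= 2%:R^-1).

Definition clip_kernel (y : 'I_m * bool) (z : 'I_n * bool) : R :=
  if eps z.1 < s then T y z
  else mass z.1 y.1 * bsc (link_crossover (sig y.1) s) y.2 z.2.

Lemma clip_kernel_degrades :
  degrades_by (bsc_mix p (fun j => Num.min (eps j) s)) (bsc_mix q sig) clip_kernel.
Proof.
case: T_degrades => T_ge0 T_sum1 W_E.
split=> [[i c] [j b] | [i c] | a [j b]]; rewrite /clip_kernel /=.
- case: ifP => _ //.
  by rewrite mulr_ge0 ?mass_ge0 ?bsc_ge0 ?link_crossover_range.
- rewrite big_pair_bool -(sum_mass i); apply: eq_bigr => j _ /=.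
  by case: ifP => _; rewrite ?massE // -mulrDr bsc_sum mulr1.
- rewrite {1}/bsc_mix /=; have [_ | _] := ltP (eps j) s; first exact: (W_E a (j, b)).
  rewrite -sum_weighted_mass mulr_suml big_pair_bool; apply: eq_bigr => i _ /=.
  rewrite -(bsc_link_comp a b (sig_le i) s_le) big_bool /bsc_mix /=; ring.
Qed.

End Clip.

Lemma degraded_bsc_mix_clip n m (p eps : 'I_n -> R) (q sig : 'I_m -> R) s :
  (forall i, sig i <= s) -> s <= 2%:R^-1 ->
  degraded (bsc_mix p eps) (bsc_mix q sig) ->
  degraded (bsc_mix p (fun j => Num.min (eps j) s)) (bsc_mix q sig).
Proof.
move=> sig_le s_le /(degraded_symmetric (@flip_outK m) (@flip_outK n)).
case=> [||T T_degrades T_flip]; try exact: bsc_mix_flip.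
by exists (clip_kernel eps sig T s); apply: clip_kernel_degrades.
Qed.

Lemma sum_mul_min_lt k (p e : 'I_k -> R) s (j0 : 'I_k) :
  (forall j, 0 < p j) -> s < e j0 ->
  \sum_j p j * Num.min (e j) s < \sum_j p j * e j.
Proof.
move=> p_gt0 s_lt; rewrite [ltRHS](bigD1 j0) // [ltLHS](bigD1 j0) //=.
apply: ltr_leD.
  by rewrite ltr_pM2l // (min_r (ltW s_lt)).
by apply: ler_sum => j _; rewrite ler_pM2l // ge_min lexx.
Qed.

Lemma incr_ord_bounds k (f : 'I_k.+1 -> R) :
  (forall i j : 'I_k.+1, (i < j)%N -> f i < f j) ->
  forall i, f ord0 <= f i <= f ord_max.
Proof.
move=> f_incr.
have f_le (i j : 'I_k.+1) : (i <= j)%N -> f i <= f j.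
  by rewrite leq_eqVlt => /orP[/eqP/val_inj-> // | /f_incr/ltW].
by move=> i; rewrite !f_le // -ltnS.
Qed.

End BSC.

Theorem lemma4 (R : realFieldType) (n m : nat)
  (p eps : 'I_n.+1 -> R) (q sig : 'I_m.+1 -> R)
  (hp : forall j, 0 < p j) (hp1 : \sum_(j < n.+1) p j = 1)
  (hq : forall i, 0 < q i) (hq1 : \sum_(i < m.+1) q i = 1)
  (heps_inc : forall i j : 'I_n.+1, (i < j)%N -> eps i < eps j)
  (heps0 : 0 <= eps ord0) (heps1 : eps ord_max <= 2%:R^-1)
  (hsig_inc : forall i j : 'I_m.+1, (i < j)%N -> sig i < sig j)
  (hsig0 : 0 <= sig ord0) (hsig1 : sig ord_max <= 2%:R^-1)
  (hW : inBstar n.+1 (bsc_mix p eps))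
  (hQ : inBstar m.+1 (bsc_mix q sig)) :
  degraded (bsc_mix p eps) (bsc_mix q sig) ->
  sig ord0 <= eps ord0 /\
  (P_degradation n.+1 (bsc_mix p eps) (bsc_mix q sig) ->
   eps ord_max <= sig ord_max).
Proof.
move=> W_deg; have sig_bd := incr_ord_bounds hsig_inc.
have eps_bd := incr_ord_bounds heps_inc.
split.
  have q_ge0 i : 0 <= q i by apply: ltW.
  have sig_range i : sig ord0 <= sig i <= 1 - sig ord0.
    by have /andP[? ?] := sig_bd i; have /andP[? ?] := sig_bd ord_max; apply/andP; lra.
  have := degraded_posterior_ge W_deg (bsc_mix_posterior_ge q_ge0 sig_range) (ord0, false).
  by rewrite /bsc_mix /bsc /= -mulrDr subrK mulr1 mulrC ler_pM2l.
case=> _ _ _ W_opt; rewrite leNgt; apply/negP => sig_lt_eps.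
set s := sig ord_max in sig_lt_eps hsig1.
have sig_le i : sig i <= s by have /andP[] := sig_bd i.
have s_ge0 : 0 <= s := le_trans hsig0 (sig_le ord0).
have p_ge0 j : 0 <= p j by apply: ltW.
have eps_le j : eps j <= 2%:R^-1 by have /andP[_ ?] := eps_bd j; lra.
have clip_range j : 0 <= Num.min (eps j) s <= 2%:R^-1.
  have /andP[? _] := eps_bd j; have := eps_le j.
  by case: (ltP (eps j) s) => ? ?; apply/andP; lra.
have clip_inB : inB n.+1 (bsc_mix p (fun j => Num.min (eps j) s)).
  by apply: inB_bsc_mix => // j; have /andP[? ?] := clip_range j; apply/andP; lra.
have := W_opt _ _ clip_inB (degraded_bsc_mix_clip sig_le hsig1 W_deg).
rewrite !Pe_bsc_mix // => [|j]; last by have /andP[] := clip_range j.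
by rewrite leNgt (sum_mul_min_lt hp sig_lt_eps).
Qed.
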